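(* Let $\mathcal E$ be either an energy-preserving channel or, more generally, a unital average-energy non-increasing channel on $S$, let $\tau\in\mathsf P(S)$ be a passive state, let $p\in[0,1]$, and define the channel $\mathcal C(\rho)=p\,\mathcal E(\rho)+(1-p)\,\tau$. Then $\mathsf{Erg}(\mathcal C(\rho))\le \mathsf{Erg}(\rho)$ for every state $\rho\in\mathsf{St}(S)$. In particular every channel obtained by energy-preserving channels and passive resets (EPCPR) is ergotropy non-increasing.
   Context: $S$ is a $d$-dimensional quantum system with non-degenerate Hamiltonian $H=\sum_{i=1}^d E_i|i\rangle\langle i|$, $E_1<E_2<\dots<E_d$; $\mathsf{St}(S)$ is the set of density matrices on $\mathbb C^d$. The ergotropy of $\rho$ is $\mathsf{Erg}(\rho)=\mathrm{Tr}[H\rho]-\min_U \mathrm{Tr}[HU\rho U^\dagger]$, minimum over all unitaries $U$. A state is passive if its ergotropy is zero; equivalently, it is of the form $\sum_i p_i|i\rangle\langle i|$ with $p_1\ge p_2\ge\dots\ge p_d$. $\mathsf P(S)$ denotes the set of passive states. An energy-preserving channel is a quantum channel (CPTP map) $\mathcal E$ with $\langle i|\mathcal E(\rho)|i\rangle=\langle i|\rho|i\rangle$ for all states $\rho$ and all $i$. A unital average-energy non-increasing channel is a quantum channel $\mathcal E$ with $\mathcal E(I)=I$ and $\mathrm{Tr}[H\mathcal E(\rho)]\le\mathrm{Tr}[H\rho]$ for all states $\rho$. *)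

From HB Require Import structures.
From mathcomp Require Import all_boot all_order all_algebra.
From mathcomp Require Import complex mxtens.
From mathcomp Require Import classical_sets reals.
Set Implicit Arguments. Unset Strict Implicit. Unset Printing Implicit Defensive.
Import Order.TTheory GRing.Theory Num.Theory.
Local Open Scope ring_scope.
Local Open Scope complex_scope.

Section QDefs.
Variable R : realType.
Local Notation C := R[i].

Definition adjmx {m n : nat} (A : 'M[C]_(m, n)) : 'M[C]_(n, m) :=
  (map_mx (@conjc R) A)^T.

Definition psd {n : nat} (A : 'M[C]_n) : Prop :=
  A = adjmx A /\ forall v : 'cV[C]_n, 0 <= (adjmx v *m A *m v) 0 0.

Definition state {d : nat} (rho : 'M[C]_d) : Prop := psd rho /\ \tr rho = 1.

Definition unitary {d : nat} (U : 'M[C]_d) : Prop :=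
  adjmx U *m U = 1%:M /\ U *m adjmx U = 1%:M.

Definition hamiltonian {d : nat} (E : 'I_d -> R) : 'M[C]_d :=
  diag_mx (\row_i (E i)%:C).

(* Tr[H rho] (real part; it is real for hermitian rho) *)
Definition energy {d : nat} (H rho : 'M[C]_d) : R := complex.Re (\tr (H *m rho)).

(* Erg(rho) = Tr[H rho] - min_U Tr[H U rho U^dagger]  (min taken as inf) *)
Definition ergotropy {d : nat} (H rho : 'M[C]_d) : R :=
  energy H rho -
  inf (fun x : R => exists U : 'M[C]_d, unitary U /\
                      x = energy H (U *m rho *m adjmx U)).

Definition passive {d : nat} (H tau : 'M[C]_d) : Prop :=
  state tau /\ ergotropy H tau = 0.

(* ampliation id_n (x) Phi acting on C^n (x) C^d *)
Definition ampl (n : nat) {d : nat} (Phi : 'M[C]_d -> 'M[C]_d)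
  (X : 'M[C]_(n * d)) : 'M[C]_(n * d) :=
  \matrix_(i, j)
    (Phi (\matrix_(a, b) X (mxtens_index ((mxtens_unindex i).1, a))
                            (mxtens_index ((mxtens_unindex j).1, b))))
      (mxtens_unindex i).2 (mxtens_unindex j).2.

Definition completely_positive {d : nat} (Phi : 'M[C]_d -> 'M[C]_d) : Prop :=
  forall (n : nat) (X : 'M[C]_(n * d)), psd X -> psd (ampl Phi X).

Definition channel {d : nat} (Phi : 'M[C]_d -> 'M[C]_d) : Prop :=
  [/\ forall (a : C) (A B : 'M[C]_d), Phi (a *: A + B) = a *: Phi A + Phi B,
      forall A : 'M[C]_d, \tr (Phi A) = \tr A
    & completely_positive Phi].

Definition energy_preserving {d : nat} (Phi : 'M[C]_d -> 'M[C]_d) : Prop :=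
  channel Phi /\ forall rho : 'M[C]_d, state rho -> forall i, Phi rho i i = rho i i.

Definition unital_energy_nonincreasing {d : nat} (H : 'M[C]_d)
  (Phi : 'M[C]_d -> 'M[C]_d) : Prop :=
  [/\ channel Phi, Phi 1%:M = 1%:M
    & forall rho : 'M[C]_d, state rho -> energy H (Phi rho) <= energy H rho].

(* one EPCPR building block: rho |-> p Phi(rho) + (1-p) Tr(rho) tau,
   with Phi energy preserving and tau passive (p = 1: EP channel,
   p = 0: passive reset) *)
Definition epcpr_step {d : nat} (H : 'M[C]_d) (Psi : 'M[C]_d -> 'M[C]_d) : Prop :=
  exists (p : R) (Phi : 'M[C]_d -> 'M[C]_d) (tau : 'M[C]_d),
    [/\ 0 <= p <= 1, energy_preserving Phi, passive H tau
      & forall rho, Psi rho = (p%:C) *: Phi rho + ((1 - p)%:C * \tr rho) *: tau].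

Definition epcpr {d : nat} (H : 'M[C]_d) (Psi : 'M[C]_d -> 'M[C]_d) : Prop :=
  exists s : seq ('M[C]_d -> 'M[C]_d),
    (forall k : nat, (k < size s)%N -> epcpr_step H (nth id s k)) /\ Psi =1 foldr (fun f g => f \o g) id s.
End QDefs.

From HB Require Import structures.
From mathcomp Require Import all_boot all_order all_algebra.
From mathcomp Require Import complex mxtens.
From mathcomp Require Import classical_sets reals.
From mathcomp Require Import fingroup perm.
From mathcomp Require Import spectral sesquilinear ring lra zify.
Set Implicit Arguments. Unset Strict Implicit. Unset Printing Implicit Defensive.
Import Order.TTheory GRing.Theory Num.Theory.
Local Open Scope ring_scope.
Local Open Scope complex_scope.

(* Write Pe(rho) = inf_U Tr[H U rho U^dagger] for the passive energy, so that
   Erg(rho) = Tr[H rho] - Pe(rho).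

   Let Phi be a unital channel and rho = sum_k lam_k Q_k a spectral
   decomposition into rank-one projections. For every unitary V the diagonal
   of V Phi(rho) V^dagger is T lam, where T_ik = <i|V Phi(Q_k) V^dagger|i> is
   doubly stochastic (trace preservation gives the column sums, unitality the
   row sums). Pairing the increasing energies E with T lam costs at least the
   pairing of E with the decreasing rearrangement of lam, which is the energy
   of a unitary conjugate of rho. Hence Pe(rho) <= Pe(Phi rho), and if Phi does
   not increase the average energy it does not increase the ergotropy.

   Pe is concave, being an infimum of linear functions, and Tr[H tau] = Pe(tau)
   for a passive tau; hence Erg(p X + (1-p) tau) <= p Erg(X). Energy-preserving
   channels are unital: Phi(|k><k|) is a state whose diagonal is that of
   |k><k|, and a positive semidefinite matrix vanishes on the rows and columns
   of its zero diagonal entries. *)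

Section ComplexMatrix.
Variable R : realType.
Local Notation C := R[i].

Lemma ReD (x y : C) : complex.Re (x + y) = complex.Re x + complex.Re y.
Proof. by case: x => a b; case: y. Qed.

Lemma Re_realM (a : R) (x : C) : complex.Re (a%:C * x) = a * complex.Re x.
Proof. by case: x => b c /=; rewrite mul0r subr0. Qed.

Lemma Re_sum (I : Type) (r : seq I) (P : pred I) (F : I -> C) :
  complex.Re (\sum_(i <- r | P i) F i) = \sum_(i <- r | P i) complex.Re (F i).
Proof. by elim/big_rec2: _ => // i y z _ <-; rewrite ReD. Qed.

Lemma Re_ge0 (z : C) : 0 <= z -> 0 <= complex.Re z.
Proof. by rewrite lecE => /andP[]. Qed.

Lemma ge0_RecE (z : C) : 0 <= z -> z = (complex.Re z)%:C.
Proof. by case: z => a b; rewrite lecE /= => /andP[/eqP -> _]. Qed.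

Lemma adjmxE m n (A : 'M[C]_(m, n)) i j : adjmx A i j = conjc (A j i).
Proof. by rewrite !mxE. Qed.

Lemma adjmxK m n (A : 'M[C]_(m, n)) : adjmx (adjmx A) = A.
Proof. by apply/matrixP => i j; rewrite !mxE conjcK. Qed.

Lemma adjmxM m n p (A : 'M[C]_(m, n)) (B : 'M_(n, p)) :
  adjmx (A *m B) = adjmx B *m adjmx A.
Proof.
apply/matrixP => i j; rewrite !mxE rmorph_sum; apply: eq_bigr => k _.
by rewrite !mxE rmorphM mulrC.
Qed.

Lemma adjmxD m n (A B : 'M[C]_(m, n)) : adjmx (A + B) = adjmx A + adjmx B.
Proof. by apply/matrixP => i j; rewrite !mxE rmorphD. Qed.

Lemma adjmxZ m n (a : C) (A : 'M[C]_(m, n)) : adjmx (a *: A) = conjc a *: adjmx A.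
Proof. by apply/matrixP => i j; rewrite !mxE rmorphM. Qed.

Lemma adjmx1 n : adjmx (1%:M : 'M[C]_n) = 1%:M.
Proof. by apply/matrixP => i j; rewrite !mxE conjc_nat eq_sym. Qed.

Lemma adjmx_delta m n (i : 'I_m) (j : 'I_n) :
  adjmx (delta_mx i j : 'M[C]_(m, n)) = delta_mx j i.
Proof. by apply/matrixP => a b; rewrite !mxE conjc_nat andbC. Qed.

Lemma adjmx_perm n (s : 'S_n) : adjmx (perm_mx s : 'M[C]_n) = perm_mx s^-1.
Proof. by rewrite -tr_perm_mx; apply/matrixP => i j; rewrite !mxE conjc_nat. Qed.

Definition qform n (v : 'cV[C]_n) (X : 'M[C]_n) : C := (adjmx v *m X *m v) 0 0.

Lemma qformE n (v : 'cV[C]_n) (X : 'M[C]_n) :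
  qform v X = \sum_l (\sum_k conjc (v k 0) * X k l) * v l 0.
Proof.
rewrite /qform mxE; apply: eq_bigr => l _; rewrite mxE; congr (_ * _).
by apply: eq_bigr => k _; rewrite adjmxE.
Qed.

Lemma delta_mulmx_delta n (X : 'M[C]_n) k l :
  delta_mx 0 k *m X *m delta_mx l 0 = (X k l)%:M :> 'M_1.
Proof.
rewrite -rowE -colE; apply/matrixP => a b.
by rewrite !ord1 !mxE eqxx mulr1n.
Qed.

Lemma qform_delta2 n (X : 'M[C]_n) (a : C) i j :
  qform (a *: delta_mx i 0 + delta_mx j 0) X =
  conjc a * a * X i i + conjc a * X i j + a * X j i + X j j.
Proof.
rewrite /qform adjmxD adjmxZ !adjmx_delta !mulmxDl !mulmxDr.
rewrite -!scalemxAl -!scalemxAr !delta_mulmx_delta !mxE !eqxx !mulr1n.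
ring.
Qed.

Lemma psd_conj m n (U : 'M[C]_(m, n)) (X : 'M[C]_n) :
  psd X -> psd (U *m X *m adjmx U).
Proof.
case=> hX pX; split; first by rewrite !adjmxM adjmxK -hX mulmxA.
by move=> v; have := pX (adjmx U *m v); rewrite !adjmxM adjmxK !mulmxA.
Qed.

Lemma psd_diag_ge0 n (X : 'M[C]_n) i : psd X -> 0 <= X i i.
Proof.
by case=> _ /(_ (delta_mx i 0)); rewrite adjmx_delta -rowE -colE !mxE.
Qed.

Lemma psdD n (X Y : 'M[C]_n) : psd X -> psd Y -> psd (X + Y).
Proof.
case=> hX pX [hY pY]; split; first by rewrite adjmxD -hX -hY.
by move=> v; rewrite mulmxDr mulmxDl mxE addr_ge0.
Qed.

Lemma psdZ n (a : R) (X : 'M[C]_n) : 0 <= a -> psd X -> psd (a%:C *: X).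
Proof.
move=> a0 [hX pX]; split; first by rewrite adjmxZ conjc_real -hX.
by move=> v; rewrite -scalemxAr -scalemxAl mxE mulr_ge0 ?ler0c.
Qed.

Lemma psd_mul_adj n (w : 'cV[C]_n) : psd (w *m adjmx w).
Proof.
split; first by rewrite adjmxM adjmxK.
move=> v; rewrite mulmxA -mulmxA mxE big_ord1.
have -> : adjmx w *m v = adjmx (adjmx v *m w) by rewrite adjmxM adjmxK.
by rewrite adjmxE mulcJ_ge0.
Qed.

Lemma conjcN_realM (a : R) (z : C) : conjc (- (a%:C * z)) = - (a%:C * conjc z).
Proof. by case: z => x y; simpc. Qed.

(* Testing positivity on [-c X_ij |i> + |j>] with [c] large makes the
   quadratic form negative unless [X_ij = 0]. *)
Lemma psd_diag0_entry0 n (X : 'M[C]_n) (i j : 'I_n) : psd X -> X i i = 0 -> X i j = 0.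
Proof.
move=> pX Xii; have [hX qX] := pX.
have Xji : X j i = conjc (X i j) by rewrite {1}hX adjmxE.
have [r r0 Xjj] : exists2 r : R, 0 <= r & X j j = r%:C.
  by exists (complex.Re (X j j)); [apply: Re_ge0 | apply: ge0_RecE]; apply: psd_diag_ge0.
set z := X i j in Xji *.
apply/eqP; apply: contraT => z0.
have [m m0 zzE] : exists2 m : R, 0 < m & z * conjc z = m%:C.
  have zz0 : 0 <= z * conjc z by apply: mulcJ_ge0.
  exists (complex.Re (z * conjc z)); last exact: ge0_RecE.
  rewrite lt_def Re_ge0 // andbT; apply/negP => /eqP re0.
  have : z * conjc z = 0 by rewrite (ge0_RecE zz0) re0.
  by move/eqP; rewrite mulf_eq0 conjc_eq0 orbb (negPf z0).
set c : R := (r + 1) / (2 * m).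
have := qX (- (c%:C * z) *: delta_mx i 0 + delta_mx j 0).
rewrite -/(qform _ _) qform_delta2 Xii Xji Xjj mulr0 add0r conjcN_realM.
have -> : - (c%:C * conjc z) * z + - (c%:C * z) * conjc z + r%:C = (r - 2 * c * m)%:C.
  transitivity (r%:C - 2%:R * c%:C * (z * conjc z)); first by ring.
  by rewrite zzE rmorphB !rmorphM rmorph_nat.
have -> : r - 2 * c * m = -1 by rewrite /c; field; exact: lt0r_neq0.
by rewrite ler0c ler0N1.
Qed.

Lemma unitary1 n : unitary (1%:M : 'M[C]_n).
Proof. by rewrite /unitary adjmx1 mul1mx. Qed.

Lemma unitaryM n (U V : 'M[C]_n) : unitary U -> unitary V -> unitary (U *m V).
Proof.
case=> U1 U2 [V1 V2]; split; rewrite adjmxM.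
  by rewrite mulmxA -[adjmx V *m _ *m _]mulmxA U1 mulmx1 V1.
by rewrite mulmxA -[U *m V *m _]mulmxA V2 mulmx1 U2.
Qed.

Lemma unitary_adj n (U : 'M[C]_n) : unitary U -> unitary (adjmx U).
Proof. by case=> U1 U2; split; rewrite adjmxK. Qed.

Lemma unitary_perm n (s : 'S_n) : unitary (perm_mx s : 'M[C]_n).
Proof. by rewrite /unitary adjmx_perm -!perm_mxM mulgV mulVg perm_mx1. Qed.

Lemma unitary_conjK n (U X : 'M[C]_n) :
  unitary U -> adjmx U *m (U *m X *m adjmx U) *m U = X.
Proof. by case=> U1 _; rewrite !mulmxA U1 mul1mx -mulmxA U1 mulmx1. Qed.

Lemma mxtrace_conj n (U X : 'M[C]_n) : unitary U -> \tr (U *m X *m adjmx U) = \tr X.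
Proof. by case=> U1 _; rewrite mxtrace_mulC mulmxA U1 mul1mx. Qed.

Lemma state_conj n (U X : 'M[C]_n) : unitary U -> state X -> state (U *m X *m adjmx U).
Proof. by move=> hU [pX tX]; split; [exact: psd_conj | rewrite mxtrace_conj]. Qed.

Lemma mxtrace_delta n (k : 'I_n) : \tr (delta_mx k k : 'M[C]_n) = 1.
Proof.
rewrite /mxtrace (bigD1 k) //= big1 => [|i /negPf ik]; first by rewrite mxE !eqxx addr0.
by rewrite mxE ik.
Qed.

Lemma state_delta n (k : 'I_n) : state (delta_mx k k : 'M[C]_n).
Proof.
split; last exact: mxtrace_delta.
by have := psd_mul_adj (delta_mx k 0 : 'cV[C]_n); rewrite adjmx_delta mul_delta_mx.
Qed.

Lemma state_mix n (p : R) (X Y : 'M[C]_n) : 0 <= p <= 1 -> state X -> state Y ->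
  state (p%:C *: X + (1 - p)%:C *: Y).
Proof.
move=> /andP[p0 p1] [pX tX] [pY tY]; split.
  by apply: psdD; apply: psdZ; rewrite ?subr_ge0.
by rewrite mxtraceD !mxtraceZ tX tY !mulr1 -rmorphD /= addrC subrK rmorph1.
Qed.

Lemma diag_conj_sum_delta n (W : 'M[C]_n) (D : 'rV[C]_n) :
  adjmx W *m diag_mx D *m W = \sum_k D 0 k *: (adjmx W *m delta_mx k k *m W).
Proof.
rewrite diag_mx_sum_delta mulmx_sumr mulmx_suml; apply: eq_bigr => k _.
by rewrite -scalemxAr -scalemxAl.
Qed.

Section Spectral.
Local Open Scope sesquilinear_scope.

Lemma adjmx_trC m n (A : 'M[C]_(m, n)) : adjmx A = A ^t*.
Proof. by apply/matrixP => i j; rewrite !mxE. Qed.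

Lemma psd_spectral n (rho : 'M[C]_n) : psd rho ->
  exists2 W, unitary W & exists2 lam : 'I_n -> R, (forall k, 0 <= lam k) &
    W *m rho *m adjmx W = diag_mx (\row_k (lam k)%:C).
Proof.
move=> prho; have nrho : rho \is normalmx.
  by apply/normalmxP; rewrite -adjmx_trC; case: prho => <-.
pose W := spectralmx rho; have uW0 := spectral_unitarymx rho.
have uW : unitary W.
  split; first by rewrite adjmx_trC -invmx_unitary // mulVmx // unitarymx_unit.
  by rewrite adjmx_trC; apply/unitarymxP.
have Wrho : W *m rho *m adjmx W = diag_mx (spectral_diag rho).
  have rhoE : rho = adjmx W *m diag_mx (spectral_diag rho) *m W.
    by rewrite adjmx_trC -invmx_unitary //; apply/orthomx_spectralP.
  by rewrite {1}rhoE !mulmxA; case: uW => _ WW; rewrite WW mul1mx -mulmxA WW mulmx1.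
have lam_ge0 k : 0 <= spectral_diag rho 0 k.
  by have := psd_diag_ge0 k (psd_conj W prho); rewrite Wrho mxE eqxx mulr1n.
exists W => //; exists (fun k => complex.Re (spectral_diag rho 0 k)).
  by move=> k; apply: Re_ge0.
rewrite Wrho; congr diag_mx; apply/matrixP => a k.
by rewrite [a]ord1 mxE -ge0_RecE.
Qed.

End Spectral.
End ComplexMatrix.

Section LinearMap.
Variables (R : realType) (d : nat) (Phi : 'M[R[i]]_d -> 'M[R[i]]_d).
Hypothesis Phi_lin : forall a A B, Phi (a *: A + B) = a *: Phi A + Phi B.

Lemma linear_map0 : Phi 0 = 0.
Proof.
have := Phi_lin 1 0 0; rewrite scaler0 addr0 scale1r.
by move/(congr1 (fun x => x - Phi 0)); rewrite /= subrr addrK.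
Qed.

Lemma linear_mapD A B : Phi (A + B) = Phi A + Phi B.
Proof. by have := Phi_lin 1 A B; rewrite !scale1r. Qed.

Lemma linear_mapZ a A : Phi (a *: A) = a *: Phi A.
Proof. by have := Phi_lin a A 0; rewrite !addr0 linear_map0 addr0. Qed.

Lemma linear_map_sum (I : Type) (r : seq I) (P : pred I) (F : I -> 'M_d) :
  Phi (\sum_(i <- r | P i) F i) = \sum_(i <- r | P i) Phi (F i).
Proof. by elim/big_rec2: _ => [|i y z _ <-]; rewrite ?linear_map0 ?linear_mapD. Qed.

End LinearMap.

Section Rearrangement.
Variable R : realType.

Definition doubly_stochastic n (T : 'I_n -> 'I_n -> R) :=
  [/\ forall i j, 0 <= T i j, forall j, \sum_i T i j = 1 & forall i, \sum_j T i j = 1].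

(* [u] is the discrete integral of [nu dE]; it certifies, LP-duality style,
   that the identity pairing of [E] with [nu] is the cheapest one. *)
Lemma antisorted_potential n (E nu : 'I_n -> R) :
  (forall i j : 'I_n, (i <= j)%N -> E i <= E j) ->
  (forall i j : 'I_n, (i <= j)%N -> nu j <= nu i) ->
  exists u : 'I_n -> R, forall i j, u i - u j <= (E i - E j) * nu j.
Proof.
case: n E nu => [|n] E nu hE hnu; first by exists (fun=> 0) => -[].
pose e k := E (inord k); pose v k := nu (inord k).
pose u k := \sum_(0 <= m < k) (e m.+1 - e m) * v m.
have eE (i : 'I_n.+1) : e i = E i by rewrite /e inord_val.
have vE (i : 'I_n.+1) : v i = nu i by rewrite /v inord_val.
have he m : (m < n)%N -> e m <= e m.+1.
  by move=> mn; apply: hE; rewrite !inordK //; lia.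
have hv m k : (m <= k <= n)%N -> v k <= v m.
  by move=> /andP[mk kn]; apply: hnu; rewrite !inordK //; lia.
have u_bounds a b : (a <= b <= n)%N ->
    (e b - e a) * v b <= u b - u a <= (e b - e a) * v a.
  move=> /andP[ab bn].
  have -> : u b - u a = \sum_(a <= m < b) (e m.+1 - e m) * v m.
    by rewrite /u (big_cat_nat (leq0n a) ab) /= addrC addrK.
  rewrite -(telescope_sumr _ ab) !mulr_suml.
  by apply/andP; split; apply: ler_sum_nat => m /andP[am mb];
    (apply: ler_wpM2l; [rewrite subr_ge0; apply: he | apply: hv]); lia.
have key (i j : 'I_n.+1) : u i - u j <= (E i - E j) * nu j.
  have [ji | ij] := leqP j i.
    have := u_bounds j i; rewrite ji (leq_ord i) => /(_ isT) /andP[_].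
    by rewrite !eE vE.
  have := u_bounds i j; rewrite (ltnW ij) (leq_ord j) => /(_ isT) /andP[+ _].
  by rewrite !eE vE !mulrBl => h; lra.
by exists (fun i => u i).
Qed.

Lemma potential_le_doubly_stochastic n (E nu u : 'I_n -> R) (T : 'I_n -> 'I_n -> R) :
  doubly_stochastic T -> (forall i j, u i - u j <= (E i - E j) * nu j) ->
  \sum_i E i * nu i <= \sum_i \sum_j E i * T i j * nu j.
Proof.
case=> T0 Tc Tr hu.
have -> : \sum_i E i * nu i = \sum_i \sum_j T i j * (u i + (E j * nu j - u j)).
  symmetry.
  transitivity (\sum_i (\sum_j T i j * u i + \sum_j T i j * (E j * nu j - u j))).
    by apply: eq_bigr => i _; rewrite -big_split /=; apply: eq_bigr => j _; rewrite mulrDr.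
  rewrite big_split /=.
  have -> : \sum_i \sum_j T i j * u i = \sum_i u i.
    by apply: eq_bigr => i _; rewrite -mulr_suml Tr mul1r.
  have -> : \sum_i \sum_j T i j * (E j * nu j - u j) = \sum_j (E j * nu j - u j).
    by rewrite exchange_big; apply: eq_bigr => j _; rewrite -mulr_suml Tc mul1r.
  by rewrite -big_split /=; apply: eq_bigr => i _; rewrite addrC subrK.
apply: ler_sum => i _; apply: ler_sum => j _.
rewrite [E i * T i j]mulrC -mulrA; apply: ler_wpM2l; first exact: T0.
by have := hu i j; rewrite mulrBl; lra.
Qed.

Lemma argmin_pairing_antisorted n (E l : 'I_n -> R) (s : 'S_n) :
  (forall i j : 'I_n, (i < j)%N -> E i < E j) ->
  (forall s' : 'S_n, \sum_i E i * l (s i) <= \sum_i E i * l (s' i)) ->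
  forall i j : 'I_n, (i <= j)%N -> l (s j) <= l (s i).
Proof.
move=> hE smin i j; rewrite leq_eqVlt => /orP[/eqP/val_inj -> // | ij].
rewrite leNgt; apply/negP => lt_ij.
have ji : j != i by rewrite neq_ltn ij orbT.
have := smin (tperm i j * s)%g.
rewrite -subr_ge0 -sumrB (bigD1 i) //= (bigD1 j) //= big1; last first.
  by move=> x /andP[xi xj]; rewrite permM tpermD 1?eq_sym // subrr.
rewrite permM tpermL permM tpermR addr0.
have : 0 < (E j - E i) * (l (s j) - l (s i)).
  by apply: mulr_gt0; rewrite subr_gt0 //; apply: hE.
by rewrite !mulrBr !mulrBl; lra.
Qed.

Lemma rearrangement_le_doubly_stochastic n (E l : 'I_n -> R) (T : 'I_n -> 'I_n -> R) :
  (forall i j : 'I_n, (i < j)%N -> E i < E j) -> doubly_stochastic T ->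
  exists s : 'S_n, \sum_i E i * l (s i) <= \sum_i \sum_k E i * T i k * l k.
Proof.
move=> hE [T0 Tc Tr].
have [s _ smin] := @arg_minP _ R _ 1%g xpredT (fun s : 'S_n => \sum_i E i * l (s i)) isT.
exists s.
have hEle (i j : 'I_n) : (i <= j)%N -> E i <= E j.
  by rewrite leq_eqVlt => /orP[/eqP/val_inj -> // | /hE/ltW].
have [u hu] := antisorted_potential hEle
  (argmin_pairing_antisorted hE (fun s' => smin s' isT)).
have -> : \sum_i \sum_k E i * T i k * l k = \sum_i \sum_j E i * T i (s j) * l (s j).
  by apply: eq_bigr => i _; exact: (reindex_inj (@perm_inj _ s)).
apply: (potential_le_doubly_stochastic (T := fun i j => T i (s j))) hu.
split=> [i j | j | i]; [exact: T0 | exact: Tc | ].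
by rewrite -(Tr i); symmetry; exact: (reindex_inj (@perm_inj _ s)).
Qed.

End Rearrangement.

Section ChannelPositivity.
Variables (R : realType) (d : nat).
Local Notation C := R[i].

(* Complete positivity with an ancilla of dimension 1 is plain positivity,
   once [C^1 (x) C^d] is identified with [C^d]. *)
Definition tens1 (a : 'I_d) : 'I_(1 * d) := mxtens_index (ord0 : 'I_1, a).
Definition untens1 (i : 'I_(1 * d)) : 'I_d := (mxtens_unindex i).2.
Arguments tens1 : simpl never.
Arguments untens1 : simpl never.

Lemma tens1K : cancel tens1 untens1.
Proof. by move=> a; rewrite /untens1 /tens1 mxtens_indexK. Qed.

Lemma untens1K : cancel untens1 tens1.
Proof.
move=> i; rewrite /tens1 /untens1 -[RHS]mxtens_unindexK; congr mxtens_index.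
by case: (mxtens_unindex i) => x y /=; rewrite [x]ord1 [ord0]ord1.
Qed.

Lemma sum_tens1 (F : 'I_(1 * d) -> C) : \sum_i F i = \sum_a F (tens1 a).
Proof. exact: (reindex tens1 (onW_bij _ (Bijective tens1K untens1K))). Qed.

Definition tens1mx (M : 'M[C]_d) : 'M[C]_(1 * d) :=
  \matrix_(i, j) M (untens1 i) (untens1 j).

Lemma qform_tens1mx (v : 'cV[C]_d) M :
  qform (\col_i v (untens1 i) 0) (tens1mx M) = qform v M.
Proof.
rewrite !qformE sum_tens1; apply: eq_bigr => l _.
rewrite sum_tens1 !mxE tens1K; congr (_ * _); apply: eq_bigr => k _.
by rewrite !mxE !tens1K.
Qed.

Lemma psd_tens1mx M : psd M -> psd (tens1mx M).
Proof.
case=> hM pM; split.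
  by apply/matrixP => i j; rewrite adjmxE !mxE {1}hM adjmxE.
move=> w; rewrite -/(qform _ _).
have -> : w = \col_i (\col_a w (tens1 a) 0) (untens1 i) 0.
  by apply/matrixP => i j; rewrite !mxE untens1K [j]ord1.
by rewrite qform_tens1mx; apply: pM.
Qed.

Lemma tens1mx_psd M : psd (tens1mx M) -> psd M.
Proof.
case=> hM pM; split.
  apply/matrixP => a b.
  have := congr1 (fun X : 'M[C]_(1 * d) => X (tens1 a) (tens1 b)) hM.
  by rewrite /= !adjmxE !mxE !tens1K => ->.
by move=> v; rewrite -/(qform _ _) -qform_tens1mx; apply: pM.
Qed.

Lemma ampl_tens1mx (Phi : 'M[C]_d -> 'M[C]_d) M : ampl Phi (tens1mx M) = tens1mx (Phi M).
Proof.
apply/matrixP => i j; rewrite !mxE; congr (Phi _ _ _).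
by apply/matrixP => a b; rewrite !mxE /untens1 !mxtens_indexK.
Qed.

Lemma channel_psd (Phi : 'M[C]_d -> 'M[C]_d) M : channel Phi -> psd M -> psd (Phi M).
Proof.
by case=> _ _ cp pM; apply: tens1mx_psd; rewrite -ampl_tens1mx; apply: cp; apply: psd_tens1mx.
Qed.

Lemma channel_state (Phi : 'M[C]_d -> 'M[C]_d) M : channel Phi -> state M -> state (Phi M).
Proof. by move=> ch [pM tM]; split; [exact: channel_psd | case: ch => _ ->]. Qed.

Lemma energy_preserving_unital (Phi : 'M[C]_d -> 'M[C]_d) :
  energy_preserving Phi -> Phi 1%:M = 1%:M.
Proof.
case=> ch diagE; have [lin _ _] := ch.
rewrite mx1_sum_delta (linear_map_sum lin); apply: eq_bigr => k _.
have sk := state_delta R k; have pk := channel_psd ch (proj1 sk); have [herm _] := pk.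
have dk i : Phi (delta_mx k k) i i = delta_mx k k i i by apply: diagE.
have off i j : i != k -> Phi (delta_mx k k) i j = 0.
  by move=> ik; apply: psd_diag0_entry0 => //; rewrite dk mxE (negPf ik).
apply/matrixP => i j; rewrite [RHS]mxE.
have [-> | ik] := eqVneq i k; last by rewrite off // (negPf ik).
have [-> | jk] := eqVneq j k; first by rewrite dk mxE eqxx.
by rewrite herm adjmxE off // conjc0.
Qed.

Lemma channel_diag_doubly_stochastic (Phi : 'M[C]_d -> 'M[C]_d) (V : 'M[C]_d)
    (Q : 'I_d -> 'M[C]_d) :
  channel Phi -> Phi 1%:M = 1%:M -> unitary V ->
  (forall k, state (Q k)) -> \sum_k Q k = 1%:M ->
  doubly_stochastic (fun i k => complex.Re ((V *m Phi (Q k) *m adjmx V) i i)).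
Proof.
move=> ch un hV sQ sumQ; have [lin tp _] := ch; split=> [i k | k | i]; cbv beta.
- apply: Re_ge0; apply: psd_diag_ge0; apply: psd_conj.
  exact: channel_psd ch (proj1 (sQ k)).
- by rewrite -Re_sum -/(mxtrace _) mxtrace_conj // tp (proj2 (sQ k)).
rewrite -Re_sum -(summxE _ _ (fun k => V *m Phi (Q k) *m adjmx V)).
rewrite -mulmx_suml -mulmx_sumr -(linear_map_sum lin) sumQ un mulmx1.
by case: hV => _ ->; rewrite mxE eqxx.
Qed.

End ChannelPositivity.

Section Ergotropy.
Variables (R : realType) (d : nat) (E : 'I_d -> R).
Hypothesis hE : forall i j : 'I_d, (i < j)%N -> E i < E j.
Local Notation C := R[i].
Local Notation H := (hamiltonian E).

Lemma energyE (X : 'M[C]_d) : energy H X = \sum_i E i * complex.Re (X i i).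
Proof.
rewrite /energy /hamiltonian /mxtrace Re_sum; apply: eq_bigr => i _.
by rewrite mul_diag_mx !mxE Re_realM.
Qed.

Lemma energyD (X Y : 'M[C]_d) : energy H (X + Y) = energy H X + energy H Y.
Proof. by rewrite /energy mulmxDr mxtraceD ReD. Qed.

Lemma energyZ (a : R) (X : 'M[C]_d) : energy H (a%:C *: X) = a * energy H X.
Proof. by rewrite /energy -scalemxAr mxtraceZ Re_realM. Qed.

Lemma energy_sum (I : Type) (r : seq I) (P : pred I) (a : I -> R) (M : I -> 'M[C]_d) :
  energy H (\sum_(i <- r | P i) (a i)%:C *: M i) = \sum_(i <- r | P i) a i * energy H (M i).
Proof.
elim/big_rec2: _ => [|i y z _ <-]; first by rewrite /energy mulmx0 mxtrace0.
by rewrite energyD energyZ.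
Qed.

Lemma energy_perm_diag (s : 'S_d) (lam : 'I_d -> R) :
  energy H (perm_mx s *m diag_mx (\row_k (lam k)%:C) *m adjmx (perm_mx s)) =
  \sum_i E i * lam (s i).
Proof.
rewrite energyE; apply: eq_bigr => i _.
by rewrite adjmx_perm -row_permE -col_permE !mxE eqxx mulr1n.
Qed.

Definition passive_energy (X : 'M[C]_d) : R :=
  inf (fun x : R => exists U : 'M[C]_d, unitary U /\ x = energy H (U *m X *m adjmx U)).

Lemma ergotropyE X : ergotropy H X = energy H X - passive_energy X.
Proof. by []. Qed.

Lemma energy_conj_ge (X U : 'M[C]_d) : psd X -> unitary U ->
  - (\sum_j `|E j|) * complex.Re (\tr X) <= energy H (U *m X *m adjmx U).
Proof.
move=> pX hU; rewrite -(mxtrace_conj X hU) energyE /mxtrace Re_sum mulr_sumr.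
apply: ler_sum => i _; apply: ler_wpM2r.
  by apply: Re_ge0; apply: psd_diag_ge0; apply: psd_conj.
rewrite lerNl; apply: le_trans (ler_norm _) _; rewrite normrN.
by rewrite (bigD1 i) //= lerDl sumr_ge0.
Qed.

Lemma passive_energy_le (X U : 'M[C]_d) : psd X -> unitary U ->
  passive_energy X <= energy H (U *m X *m adjmx U).
Proof.
move=> pX hU; apply: ge_inf; last by exists U.
exists (- (\sum_j `|E j|) * complex.Re (\tr X)) => y [V [hV ->]].
exact: energy_conj_ge.
Qed.

Lemma passive_energy_ge (X : 'M[C]_d) c :
  (forall U, unitary U -> c <= energy H (U *m X *m adjmx U)) -> c <= passive_energy X.
Proof.
move=> h; apply: lb_le_inf; last by move=> y [U [hU ->]]; exact: h.
by exists (energy H (1%:M *m X *m adjmx 1%:M)), 1%:M; split=> //; exact: unitary1.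
Qed.

Lemma ergotropy_ge0 (X : 'M[C]_d) : psd X -> 0 <= ergotropy H X.
Proof.
move=> pX; rewrite ergotropyE subr_ge0.
by have := passive_energy_le pX (unitary1 R d); rewrite adjmx1 mul1mx mulmx1.
Qed.

Lemma passive_energy_concave (p : R) (X Y : 'M[C]_d) : 0 <= p <= 1 -> psd X -> psd Y ->
  p * passive_energy X + (1 - p) * passive_energy Y <=
  passive_energy (p%:C *: X + (1 - p)%:C *: Y).
Proof.
move=> /andP[p0 p1] pX pY; apply: passive_energy_ge => U hU.
rewrite mulmxDr mulmxDl -!scalemxAr -!scalemxAl energyD !energyZ.
by apply: lerD; apply: ler_wpM2l; rewrite ?subr_ge0 //; exact: passive_energy_le.
Qed.

Lemma ergotropy_mix_passive (p : R) (X tau : 'M[C]_d) :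
  0 <= p <= 1 -> psd X -> passive H tau ->
  ergotropy H (p%:C *: X + (1 - p)%:C *: tau) <= p * ergotropy H X.
Proof.
move=> hp pX [[ptau _] etau].
have concave := passive_energy_concave hp pX ptau.
have tauE : energy H tau = passive_energy tau.
  by apply/eqP; rewrite -subr_eq0 -ergotropyE etau eqxx.
rewrite !ergotropyE energyD !energyZ tauE.
apply: (le_trans (lerB (lexx _) concave)).
by rewrite opprD addrACA subrr addr0 -mulrBr.
Qed.

Lemma passive_energy_le_channel (Phi : 'M[C]_d -> 'M[C]_d) (rho : 'M[C]_d) :
  channel Phi -> Phi 1%:M = 1%:M -> psd rho ->
  passive_energy rho <= passive_energy (Phi rho).
Proof.
move=> ch un prho; have [lin _ _] := ch.
have [W uW [lam lam_ge0 Wrho]] := psd_spectral prho.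
pose Q k := adjmx W *m delta_mx k k *m W.
have sQ k : state (Q k).
  rewrite /Q -[X in _ *m X](adjmxK W).
  by apply: state_conj; [exact: unitary_adj | exact: state_delta].
have sumQ : \sum_k Q k = 1%:M.
  have := diag_conj_sum_delta W (const_mx 1); rewrite diag_const_mx mulmx1.
  by case: uW => -> _ ->; apply: eq_bigr => k _; rewrite mxE scale1r.
have rhoE : rho = \sum_k (lam k)%:C *: Q k.
  rewrite -(unitary_conjK rho uW) Wrho diag_conj_sum_delta.
  by apply: eq_bigr => k _; rewrite mxE.
apply: passive_energy_ge => V hV.
have ds := channel_diag_doubly_stochastic ch un hV sQ sumQ.
have -> : energy H (V *m Phi rho *m adjmx V) =
    \sum_i \sum_k E i * complex.Re ((V *m Phi (Q k) *m adjmx V) i i) * lam k.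
  rewrite rhoE (linear_map_sum lin) mulmx_sumr mulmx_suml.
  under eq_bigr do rewrite (linear_mapZ lin) -scalemxAr -scalemxAl.
  rewrite energy_sum exchange_big; apply: eq_bigr => k _.
  by rewrite energyE mulr_sumr; apply: eq_bigr => i _; rewrite mulrC.
have [s hs] := rearrangement_le_doubly_stochastic lam hE ds.
apply: le_trans hs.
have conjE : perm_mx s *m W *m rho *m adjmx (perm_mx s *m W) =
    perm_mx s *m diag_mx (\row_k (lam k)%:C) *m adjmx (perm_mx s).
  by rewrite adjmxM -Wrho !mulmxA.
rewrite -(energy_perm_diag s lam) -conjE.
exact: passive_energy_le prho (unitaryM (unitary_perm R s) uW).
Qed.

Lemma ergotropy_le_channel (Phi : 'M[C]_d -> 'M[C]_d) (rho : 'M[C]_d) :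
  unital_energy_nonincreasing H Phi -> state rho ->
  ergotropy H (Phi rho) <= ergotropy H rho.
Proof.
case=> ch un en srho; rewrite !ergotropyE.
by apply: lerB; [exact: en srho | exact: passive_energy_le_channel ch un (proj1 srho)].
Qed.

Lemma energy_preserving_unital_nonincreasing (Phi : 'M[C]_d -> 'M[C]_d) :
  energy_preserving Phi -> unital_energy_nonincreasing H Phi.
Proof.
move=> ep; have [ch diagE] := ep.
split; [exact: ch | exact: energy_preserving_unital ep | move=> rho srho].
suff -> : energy H (Phi rho) = energy H rho by [].
by rewrite !energyE; apply: eq_bigr => i _; rewrite (diagE _ srho).
Qed.

Lemma ergotropy_mix_channel_passive (Phi : 'M[C]_d -> 'M[C]_d) tau (p : R) rho :
  unital_energy_nonincreasing H Phi -> passive H tau -> 0 <= p <= 1 -> state rho ->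
  ergotropy H (p%:C *: Phi rho + (1 - p)%:C *: tau) <= ergotropy H rho.
Proof.
move=> hPhi ptau hp srho; have [ch _ _] := hPhi; have /andP[_ p1] := hp.
have pPhi := channel_psd ch (proj1 srho).
apply: (le_trans (ergotropy_mix_passive hp pPhi ptau)).
apply: le_trans (ergotropy_le_channel hPhi srho).
by apply: ler_piMl => //; exact: ergotropy_ge0 pPhi.
Qed.

Lemma epcpr_step_contractive (Psi : 'M[C]_d -> 'M[C]_d) rho :
  epcpr_step H Psi -> state rho ->
  state (Psi rho) /\ ergotropy H (Psi rho) <= ergotropy H rho.
Proof.
case=> p [Phi [tau [hp ep ptau PsiE]]] srho.
have -> : Psi rho = p%:C *: Phi rho + (1 - p)%:C *: tau.
  by rewrite PsiE (proj2 srho) mulr1.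
split; first exact: state_mix hp (channel_state (proj1 ep) srho) (proj1 ptau).
exact: ergotropy_mix_channel_passive (energy_preserving_unital_nonincreasing ep) ptau hp srho.
Qed.

Lemma epcpr_contractive (Psi : 'M[C]_d -> 'M[C]_d) rho :
  epcpr H Psi -> state rho ->
  state (Psi rho) /\ ergotropy H (Psi rho) <= ergotropy H rho.
Proof.
case=> s [hs PsiE] srho; rewrite PsiE.
elim: s hs {PsiE} => [|f s IH] hs /=; first by split.
have [st er] := IH (fun k => hs k.+1).
have [st' er'] := epcpr_step_contractive (hs 0%N isT) st.
by split; [exact: st' | exact: le_trans er' er].
Qed.

End Ergotropy.

Theorem mainTheorem1 (R : realType) (d : nat) (E : 'I_d -> R)
  (hE : forall i j : 'I_d, (i < j)%N -> E i < E j) :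
  (forall (Phi : 'M[R[i]]_d -> 'M[R[i]]_d) (tau : 'M[R[i]]_d) (p : R),
     energy_preserving Phi \/ unital_energy_nonincreasing (hamiltonian E) Phi ->
     passive (hamiltonian E) tau ->
     0 <= p <= 1 ->
     forall rho : 'M[R[i]]_d, state rho ->
       ergotropy (hamiltonian E) ((p%:C) *: Phi rho + ((1 - p)%:C) *: tau)
       <= ergotropy (hamiltonian E) rho)
  /\
  (forall Psi : 'M[R[i]]_d -> 'M[R[i]]_d, epcpr (hamiltonian E) Psi ->
     forall rho : 'M[R[i]]_d, state rho ->
       ergotropy (hamiltonian E) (Psi rho) <= ergotropy (hamiltonian E) rho).
Proof.
split=> [Phi tau p hPhi ptau hp rho srho | Psi hPsi rho srho].
  have uen : unital_energy_nonincreasing (hamiltonian E) Phi.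
    by case: hPhi => [/(energy_preserving_unital_nonincreasing E) |].
  exact: (ergotropy_mix_channel_passive hE uen ptau hp srho).
exact: proj2 (epcpr_contractive hE hPsi srho).
Qed.
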